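(* Let $N \ge 1$ be an integer. For every integer $M$ with $0 \le M \le \binom{\lfloor N/2 \rfloor + 1}{2} - 1$, the pair $(N,M)$ is feasible for the family of all line graphs.
   Context: All graphs are finite and simple; $L(G)$ is the line graph of $G$. A pair $(N,M)$ is feasible (for the family of all line graphs) if there exists a graph $G$ such that $L(G)$ has exactly $N$ vertices and exactly $M$ edges. *)

From mathcomp Require Import all_boot.
Set Implicit Arguments.
Unset Strict Implicit.
Unset Printing Implicit Defensive.

(* A finite simple graph with vertex type T is given by its edge set
   E : {set {set T}}, each edge being a 2-element subset of T. *)
Definition simple_graph (T : finType) (E : {set {set T}}) : Prop :=
  forall e, e \in E -> #|e| = 2.

Definition line_graph_edges (T : finType) (E : {set {set T}})
  : {set {set {set T}}} :=
  [set [set e; f] | e in E, f in E & (e != f) && ~~ [disjoint e & f]].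

Definition lg_vertices (T : finType) (E : {set {set T}}) : nat := #|E|.
Definition lg_edges (T : finType) (E : {set {set T}}) : nat :=
  #|line_graph_edges E|.

(* (N, M) is feasible for the family of line graphs: some finite simple graph
   G has |V(L(G))| = N and |E(L(G))| = M.  Every finite graph is isomorphic to
   one on vertex type 'I_n. *)
Definition line_feasible (N M : nat) : Prop :=
  exists (n : nat) (E : {set {set 'I_n}}),
    simple_graph E /\ lg_vertices E = N /\ lg_edges E = M.

From mathcomp Require Import all_boot zify.

(* Write M = 'C(a, 2) + r with 0 <= r < a.  Take a star with a edges (its
   line graph is K_a, with 'C(a, 2) edges), hang a path of r edges off one of
   its leaves (each path edge meets only its predecessor), and add isolated
   edges up to N edges in total; this fits since a + r < 2a <= N.  The count
   is done edge by edge: adding a new edge e to E creates one edge of the line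
   graph for each edge of E that meets e. *)

Lemma set2_inj (T : finType) (x : T) : injective (fun y => [set x; y]).
Proof.
move=> y z /setP eq_xy.
move: (eq_xy y) (eq_xy z); rewrite !inE !eqxx !orbT => /esym/orP[]/eqP-> //.
by case/orP=> /eqP.
Qed.

Lemma set2_meetE (T : finType) (a b c d : T) :
  ~~ [disjoint [set a; b] & [set c; d]] = [|| a == c, a == d, b == c | b == d].
Proof.
have ab : [set a; b] =i [:: a; b] by move=> x; rewrite !inE.
rewrite (eq_disjoint ab) !disjoint_cons disjoint_has /= !inE.
by rewrite andbT -negb_or negbK -!orbA.
Qed.

Lemma card_set_seq_filter (T : finType) (s : seq T) (P : pred T) : uniq s ->
  #|[set x in [set:: s] | P x]| = count P s.
Proof.
move=> us; rewrite -size_filter -(card_uniqP (filter_uniq P us)).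
by apply: eq_card => x; rewrite !inE mem_filter andbC.
Qed.

Section LineGraph.
Variable T : finType.
Implicit Types (e : {set T}) (E : {set {set T}}).

Lemma line_graph_edgesU1 e E : e \notin E ->
  line_graph_edges (e |: E) =
  line_graph_edges E :|: [set [set e; f] | f in E & ~~ [disjoint e & f]].
Proof.
move=> eNE; apply/setP => X; rewrite !inE; apply/imset2P/orP => [[x y]|].
  rewrite !inE => /predU1P[-> | xE] /andP[/predU1P[-> | yE] /andP[xy meet]] ->.
  - by rewrite eqxx in xy.
  - by right; apply: imset_f; rewrite inE yE.
  - by right; rewrite setUC; apply: imset_f; rewrite inE xE disjoint_sym.
  - by left; apply: imset2_f; rewrite ?inE ?xE ?yE ?xy.
case=> [/imset2P[x y xE] | /imsetP[f]].
  by rewrite inE => /andP[yE xy] ->; exists x y; rewrite ?inE ?xE ?yE ?orbT.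
rewrite inE => /andP[fE meet] ->; exists e f; rewrite ?inE ?eqxx ?fE ?orbT //=.
by rewrite meet andbT; apply: contraNneq eNE => ->.
Qed.

Lemma card_line_graph_edgesU1 e E : e \notin E ->
  #|line_graph_edges (e |: E)| =
  #|line_graph_edges E| + #|[set f in E | ~~ [disjoint e & f]]|.
Proof.
move=> eNE; rewrite line_graph_edgesU1 // cardsU card_imset; last exact: set2_inj.
suff /eqP-> : line_graph_edges E :&: [set [set e; f] | f in E & ~~ [disjoint e & f]]
              == set0 by rewrite cards0 subn0.
rewrite setI_eq0; apply/pred0P => X /=.
apply/andP => -[/imset2P[x y xE + ->] /imsetP[f _]].
rewrite inE => /andP[yE _] /setP/(_ e); rewrite !inE eqxx /=.
by case/orP=> /eqP ex; move: eNE; rewrite ex ?xE ?yE.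
Qed.

Lemma lg_edges_iota (edge : nat -> {set T}) m : uniq (map edge (iota 0 m)) ->
  lg_edges [set:: map edge (iota 0 m)] =
  \sum_(0 <= i < m) count (fun j => ~~ [disjoint edge i & edge j]) (iota 0 i).
Proof.
rewrite /lg_edges; elim: m => [_ | m IH].
  rewrite big_geq // set_nil; apply/eqP; rewrite cards_eq0.
  by apply/set0Pn => -[X /imset2P[x y]]; rewrite in_set0.
have -> : iota 0 m.+1 = rcons (iota 0 m) m by rewrite -cats1 -addn1 iotaD.
rewrite map_rcons rcons_uniq big_nat_recr //= => /andP[edgeNs us].
have -> : [set:: rcons (map edge (iota 0 m)) (edge m)] =
          edge m |: [set:: map edge (iota 0 m)].
  by apply/setP => X; rewrite !inE mem_rcons in_cons.
rewrite card_line_graph_edgesU1 ?inE // IH //.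
by rewrite card_set_seq_filter // count_map.
Qed.

End LineGraph.

Section Construction.
Variables N a r : nat.

(* Edge i joins i.+1, a vertex no earlier edge uses, to [attach i]: the centre
   0 of the star, the new vertex i of the previous edge on the path, or the
   vertex N.+1 + i, which no other edge uses. *)
Definition attach i := if i < a then 0 else if i < a + r then i else N.+1 + i.

Definition edge i : {set 'I_(2 * N).+1} := [set inord (attach i); inord i.+1].

Definition meets i j :=
  [|| attach i == attach j, attach i == j.+1, i.+1 == attach j | i.+1 == j.+1].

Lemma inord_eq x y : x <= 2 * N -> y <= 2 * N ->
  (inord x == inord y :> 'I_(2 * N).+1) = (x == y).
Proof. by move=> xN yN; rewrite -val_eqE /= !inordK. Qed.

Lemma attach_le i : i < N -> attach i <= 2 * N.
Proof. by move=> iN; rewrite /attach; do 2?case: ifP => ?; lia. Qed.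

Lemma mem_edge i x : i < N -> x <= 2 * N ->
  (inord x \in edge i) = (x == attach i) || (x == i.+1).
Proof. by move=> iN xN; rewrite !inE !inord_eq ?attach_le //; lia. Qed.

Lemma card_edge i : i < N -> #|edge i| = 2.
Proof.
move=> iN; rewrite cards2 inord_eq ?attach_le //; last lia.
by rewrite /attach; do 2?case: ifP => ?; lia.
Qed.

Lemma edge_meetE i j : i < N -> j < N -> ~~ [disjoint edge i & edge j] = meets i j.
Proof. by move=> iN jN; rewrite set2_meetE !inord_eq ?attach_le //; lia. Qed.

Lemma edge_inj : {in iota 0 N &, injective edge}.
Proof.
move=> i j; rewrite !mem_iota /= => iN jN /setP eq_ij.
move: (eq_ij (inord i.+1)) (eq_ij (inord j.+1)).
rewrite !mem_edge // ?eqxx ?orbT; try lia.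
by rewrite /attach; do 4?case: ifP => ?; lia.
Qed.

Lemma count_meets_star i : i < a -> count (meets i) (iota 0 i) = i.
Proof.
move=> ia; rewrite -[RHS](size_iota 0 i) -count_predT; apply: eq_in_count => j.
by rewrite mem_iota /meets /attach ia => /andP[_ ji]; rewrite (ltn_trans ji ia).
Qed.

Lemma count_meets_path i : 0 < a -> a <= i < a + r -> i < N ->
  count (meets i) (iota 0 i) = 1.
Proof.
move=> a0 /andP[ai iar] iN; transitivity (count_mem i.-1 (iota 0 i)); last first.
  by rewrite count_uniq_mem ?iota_uniq // mem_iota; lia.
apply: eq_in_count => j; rewrite mem_iota /meets /attach => /andP[_ ji] /=.
by do 4?case: ifP => ?; lia.
Qed.

Lemma count_meets_isolated i : a + r <= i < N -> count (meets i) (iota 0 i) = 0.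
Proof.
move=> /andP[ari iN]; rewrite (eq_in_count (a2 := pred0)) ?count_pred0 // => j.
by rewrite mem_iota /meets /attach => /andP[_ ji] /=; do 4?case: ifP => ?; lia.
Qed.

Lemma sum_count_meets : 0 < a -> a + r <= N ->
  \sum_(0 <= i < N) count (meets i) (iota 0 i) = 'C(a, 2) + r.
Proof.
move=> a0 arN.
rewrite (big_cat_nat (leq0n (a + r)) arN) (big_cat_nat (leq0n a) (leq_addr r a)) /=.
have -> : \sum_(0 <= i < a) count (meets i) (iota 0 i) = 'C(a, 2).
  by rewrite -bin2_sum; apply: eq_big_nat => i /andP[_ ia]; exact: count_meets_star.
have -> : \sum_(a <= i < a + r) count (meets i) (iota 0 i) = r.
  rewrite (eq_big_nat _ _ (F2 := fun=> 1)) ?sum_nat_const_nat ?muln1 ?addKn // => i air.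
  by apply: count_meets_path => //; lia.
rewrite (eq_big_nat _ _ (F2 := fun=> 0)) ?sum_nat_const_nat ?muln0 ?addn0 // => i ariN.
exact: count_meets_isolated.
Qed.

End Construction.

Lemma bin2_decomp M : exists a r, [/\ 0 < a, r < a & M = 'C(a, 2) + r].
Proof.
elim: M => [|M [a [r [a0 ra ->]]]]; first by exists 1, 0.
have [ra1 | ] := ltnP r.+1 a; first by exists a, r.+1; rewrite addnS.
exists a.+1, 0; split => //.
have -> : r = a.-1 by lia.
rewrite binS bin1 addn0; lia.
Qed.

Theorem mainTheorem17 (N M : nat) :
  1 <= N -> M < 'C(N./2 + 1, 2) -> line_feasible N M.
Proof.
move=> _ ltM; have [a [r [a0 ra defM]]] := bin2_decomp M.
have aN : a <= N./2.
  rewrite leqNgt; apply: contraTN ltM => lt_a; rewrite -leqNgt defM addn1.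
  exact: leq_trans (leq_bin2l 2 lt_a) (leq_addr r _).
have arN : a + r <= N by have := odd_double_half N; lia.
have uniq_edges : uniq (map (edge N a r) (iota 0 N)).
  by rewrite map_inj_in_uniq ?iota_uniq //; exact: edge_inj.
exists (2 * N).+1, [set:: map (edge N a r) (iota 0 N)]; split; [|split].
- move=> e; rewrite inE => /mapP[i]; rewrite mem_iota => /andP[_ iN] ->.
  exact: card_edge.
- by rewrite /lg_vertices cardsE (card_uniqP uniq_edges) size_map size_iota.
rewrite lg_edges_iota // defM -(sum_count_meets N _ _ a0 arN).
apply: eq_big_nat => i /andP[_ iN]; apply: eq_in_count => j.
by rewrite mem_iota => /andP[_ ji]; apply: edge_meetE; lia.
Qed.
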